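(* Let $\mathcal H_A,\mathcal H_B$ be finite-dimensional with $d_B=\dim\mathcal H_B$, and let $|\Psi\rangle=\sum_{i=1}^{d_B}\lambda_i|\phi_i^A\rangle\otimes|\xi_i^B\rangle$ be a pure state with full Schmidt rank, i.e. $\{|\phi_i^A\rangle\}$ orthonormal in $\mathcal H_A$, $\{|\xi_i^B\rangle\}$ an orthonormal basis of $\mathcal H_B$, and $\lambda_i\neq 0$ for all $i$. Then the maximal steered coherence of $|\Psi\rangle\langle\Psi|$ attains the largest possible value, namely $\mathcal C(|\Psi\rangle\langle\Psi|)=d_B-1$, the coherence of the maximally coherent state $\frac{1}{\sqrt{d_B}}\sum_{i=1}^{d_B}|\xi_i^B\rangle$.
   Context: For a bipartite state $\rho$ and a POVM element $M$ on $\mathcal H_A$ ($0\le M\le \mathbb 1$) with $p_M:=\mathrm{tr}(M\otimes\mathbb 1\,\rho)>0$, Bob's steered state is $\rho_B^M:=\mathrm{tr}_A(M\otimes\mathbb 1\,\rho)/p_M$. The $\ell_1$-coherence of a state $\sigma$ in an orthonormal basis $\Xi=\{|\xi_i\rangle\}$ is $C(\sigma,\Xi)=\sum_{i\neq j}|\langle\xi_i|\sigma|\xi_j\rangle|$; for a $d_B$-dimensional system it is at most $d_B-1$. The maximal steered coherence is $$\mathcal C(\rho)=\inf_{\Xi}\ \max_{M}\ \frac{1}{p_M}\sum_{i\neq j}\big|\langle\xi_i|\mathrm{tr}_A(M\otimes \mathbb 1\,\rho)|\xi_j\rangle\big|,$$ where the infimum is over all orthonormal eigenbases $\Xi$ of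 $\rho_B=\mathrm{tr}_A\rho$ (unique up to phases when $\rho_B$ is non-degenerate) and the maximum is over POVM elements $M$ on $\mathcal H_A$ with $p_M>0$. *)

From HB Require Import structures.
From mathcomp Require Import all_boot all_order all_algebra.
From mathcomp Require Import complex mxtens.
From mathcomp Require Import boolp classical_sets reals constructive_ereal.
From mathcomp Require Import ereal.

Set Implicit Arguments.
Unset Strict Implicit.
Unset Printing Implicit Defensive.

Import Order.TTheory GRing.Theory Num.Theory.
Local Open Scope ring_scope.
Local Open Scope classical_set_scope.

Section QDefs.
Variable R : realType.
Local Notation C := (R[i]).

Definition adjmx m n (A : 'M[C]_(m, n)) : 'M[C]_(n, m) := (map_mx Num.conj A)^T.

(* positive semidefinite: <v|M|v> >= 0 for every vector v (in C's order,
   this means real and nonnegative) *)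
Definition psdmx n (M : 'M[C]_n) : Prop :=
  forall v : 'cV[C]_n, 0 <= (adjmx v *m M *m v) 0 0.

Definition povm_elem n (M : 'M[C]_n) : Prop :=
  psdmx M /\ psdmx (1%:M - M).

Definition ptraceA dA dB (X : 'M[C]_(dA * dB)) : 'M[C]_dB :=
  \matrix_(b, b') \sum_(a < dA) X (mxtens_index (a, b)) (mxtens_index (a, b')).

Definition prob_M dA dB (rho : 'M[C]_(dA * dB)) (M : 'M[C]_dA) : C :=
  \tr ((M *t (1%:M : 'M[C]_dB)) *m rho).

Definition steered dA dB (rho : 'M[C]_(dA * dB)) (M : 'M[C]_dA) : 'M[C]_dB :=
  (prob_M rho M)^-1 *: ptraceA ((M *t (1%:M : 'M[C]_dB)) *m rho).

(* l1-coherence of sigma in the orthonormal basis whose i-th vector xi_i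
   has coordinates (Xi i k)_k (the rows of Xi):
   sum_{i <> j} |<xi_i|sigma|xi_j>| *)
Definition l1coh n (sigma Xi : 'M[C]_n) : R :=
  \sum_(i < n) \sum_(j < n | i != j)
     Normc.normc ((map_mx Num.conj Xi *m sigma *m Xi^T) i j).

Definition orth_eigenbasis n (S Xi : 'M[C]_n) : Prop :=
  Xi \is unitarymx /\
  forall i : 'I_n, exists l : C, S *m (row i Xi)^T = l *: (row i Xi)^T.

Definition max_steered_coh dA dB (rho : 'M[C]_(dA * dB)) : \bar R :=
  ereal_inf [set ereal_sup [set (l1coh (steered rho M) Xi)%:E
                           | M in [set M : 'M[C]_dA | povm_elem M /\ 0 < prob_M rho M]]
            | Xi in [set Xi : 'M[C]_dB | orth_eigenbasis (ptraceA rho) Xi]].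

Definition schmidt_state dA dB (lam : 'I_dB -> C) (Phi : 'M[C]_(dB, dA))
    (Xi : 'M[C]_dB) : 'M[C]_(dA * dB, 1 * 1) :=
  \sum_(i < dB) lam i *: ((row i Phi)^T *t (row i Xi)^T).

Definition projector m k (v : 'M[C]_(m, k)) : 'M[C]_m := v *m adjmx v.

End QDefs.

(* Write |Psi> = sum_(a,b) V_ab |a>|b> with V = Phi^T diag(lam) Xi. For a POVM
   element M, tr_A((M (x) 1)|Psi><Psi|) read in an orthonormal basis Y of H_B is
   the Gram matrix of the columns w_i of W = V Y^* for the positive form <.|M|.>,
   so positivity, |<w_i|M|w_j>| <= (<w_i|M|w_i> + <w_j|M|w_j>) / 2, bounds the
   l1-coherence of every steered state by d_B - 1 in every basis. Conversely
   W = Phi^T B with B invertible and Phi with orthonormal rows, so some x in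
   the unit ball has <x|w_i> = c != 0 for all i; the rank-one effect |x><x|
   then steers Bob to the maximally coherent state of the basis Y, whose
   coherence is d_B - 1.
   Hence every basis contributes exactly d_B - 1, and the infimum is over a
   nonempty set since Xi is an eigenbasis of rho_B. *)

From HB Require Import structures.
From mathcomp Require Import all_boot all_order all_algebra.
From mathcomp Require Import complex mxtens.
From mathcomp Require Import boolp classical_sets reals constructive_ereal.
From mathcomp Require Import ereal.
From mathcomp Require Import ring.

Set Implicit Arguments.
Unset Strict Implicit.
Unset Printing Implicit Defensive.

Import Order.TTheory GRing.Theory Num.Theory.
Local Open Scope ring_scope.

Lemma sumr_neq (V : nmodType) d (F : 'I_d -> V) i :
  \sum_(j | i != j) F j + F i = \sum_j F j.
Proof. by rewrite [RHS](bigD1 i) //= addrC; under eq_bigl do rewrite eq_sym. Qed.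

Lemma sum_offdiag_le (R : numDomainType) d (m : 'I_d -> R) (e : 'I_d -> 'I_d -> R) :
  (forall i j, `|e i j| *+ 2 <= m i + m j) ->
  \sum_i \sum_(j | i != j) `|e i j| <= (d%:R - 1) * \sum_i m i.
Proof.
move=> le_e; rewrite -(@ler_pMn2r _ 2) // -sumrMnl.
apply: le_trans (_ : \sum_i \sum_(j | i != j) (m i + m j) <= _).
  by apply: ler_sum => i _; rewrite -sumrMnl; apply: ler_sum => j _.
have offdiag_sum i : \sum_(j | i != j) (m i + m j) = m i *+ d + \sum_j m j - (m i + m i).
  apply: (addIr (m i + m i)).
  by rewrite (sumr_neq (fun j => m i + m j)) big_split sumr_const card_ord subrK.
under eq_bigr do rewrite offdiag_sum.
rewrite !sumrB big_split /= sumr_const card_ord sumrMnl big_split /=.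
set P := \sum_i m i.
suff -> : P *+ d + P *+ d - (P + P) = (d%:R - 1) * P *+ 2 by [].
by rewrite mulrBl mul1r mulr_natl mulr2n opprD addrACA.
Qed.

Lemma sum_mxtens_index (V : nmodType) m n (F : 'I_(m * n) -> V) :
  \sum_k F k = \sum_(a < m) \sum_(b < n) F (mxtens_index (a, b)).
Proof.
rewrite pair_big /= (reindex (@mxtens_index m n)) /=; last first.
  by exists (@mxtens_unindex m n) => k _; [exact: mxtens_indexK | exact: mxtens_unindexK].
by apply: eq_bigr => -[a b].
Qed.

Section SteeredCoherence.
Variable R : realType.
Local Notation C := (R[i]).

Lemma adjmxD m n (A B : 'M[C]_(m, n)) : adjmx (A + B) = adjmx A + adjmx B.
Proof. by rewrite /adjmx map_mxD linearD. Qed.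

Lemma adjmxZ m n (t : C) (A : 'M[C]_(m, n)) : adjmx (t *: A) = t^* *: adjmx A.
Proof. by apply/matrixP => i j; rewrite !mxE rmorphM. Qed.

Lemma adjmxM m n p (A : 'M[C]_(m, n)) (B : 'M[C]_(n, p)) :
  adjmx (A *m B) = adjmx B *m adjmx A.
Proof. by rewrite /adjmx map_mxM trmx_mul. Qed.

Lemma adjmxK m n (A : 'M[C]_(m, n)) : adjmx (adjmx A) = A.
Proof. by apply/matrixP => i j; rewrite !mxE conjCK. Qed.

Lemma unitarymx_mul_adj m n (U : 'M[C]_(m, n)) : U \is unitarymx -> U *m adjmx U = 1%:M.
Proof. by move/unitarymxP => <-; rewrite /adjmx map_trmx. Qed.

Lemma unitarymx_adj_mul n (U : 'M[C]_n) : U \is unitarymx -> adjmx U *m U = 1%:M.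
Proof.
rewrite -trmxC_unitary => /unitarymxP; rewrite trmxCK => <-.
by rewrite /adjmx map_trmx.
Qed.

Definition braket n (M : 'M[C]_n) (x y : 'cV[C]_n) : C := (adjmx x *m M *m y) 0 0.

Lemma braketBl n (M N : 'M[C]_n) x y : braket (M - N) x y = braket M x y - braket N x y.
Proof. by rewrite /braket mulmxBr mulmxBl !mxE. Qed.

Lemma braketZ n (M : 'M[C]_n) a b x y :
  braket M (a *: x) (b *: y) = a^* * b * braket M x y.
Proof. by rewrite /braket adjmxZ -!scalemxAl -scalemxAr 2!mxE mulrA. Qed.

Lemma braket_expand n (M : 'M[C]_n) x y t :
  braket M (x + t *: y) (x + t *: y) =
  braket M x x + t * braket M x y + t^* * braket M y x + t^* * t * braket M y y.
Proof.
rewrite /braket adjmxD adjmxZ !mulmxDl !mulmxDr -!scalemxAl -!scalemxAr !mxE.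
ring.
Qed.

Lemma braket1E n (x y : 'cV[C]_n) : braket 1%:M x y = dotmx y^T x^T.
Proof.
rewrite /braket mulmx1 dotmxE !mxE; apply: eq_bigr => k _.
by rewrite !mxE mulrC.
Qed.

Lemma braket_rank1 n (x y z : 'cV[C]_n) :
  braket (x *m adjmx x) y z = (braket 1%:M x y)^* * braket 1%:M x z.
Proof.
rewrite /braket !mulmx1 mulmxA -[_ *m adjmx x *m z]mulmxA.
rewrite -[adjmx y *m x]adjmxK adjmxM adjmxK.
by rewrite [in LHS]mxE big_ord1 /adjmx !mxE.
Qed.

Lemma conj_eq_of_polarization (b b' : C) :
  (b + b')^* = b + b' -> ('i * b - 'i * b')^* = 'i * b - 'i * b' -> b' = b^*.
Proof.
rewrite !(rmorphD, rmorphN, rmorphM) /= conjCi => e1 e2.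
have e2' : b'^* - b^* = b - b'.
  apply: (@mulfI _ 'i); first exact: neq0Ci.
  by rewrite [RHS]mulrBr -e2; ring.
have : (b'^* - b) *+ 2 = 0.
  transitivity ((b^* + b'^* - (b + b')) + (b'^* - b^* - (b - b'))); first ring.
  by rewrite e1 e2' !subrr addr0.
by move/eqP; rewrite mulrn_eq0 subr_eq0 => /eqP <-; rewrite conjCK.
Qed.

Lemma psd_braketC n (M : 'M[C]_n) x y : psdmx M -> braket M y x = (braket M x y)^*.
Proof.
move=> psdM.
have cross_real t : (t * braket M x y + t^* * braket M y x)^* =
    t * braket M x y + t^* * braket M y x.
  have -> : t * braket M x y + t^* * braket M y x = braket M (x + t *: y) (x + t *: y)
      - braket M x x - t^* * t * braket M y y by rewrite braket_expand; ring.
  have tt_ge0 : 0 <= t^* * t by rewrite -normCKC exprn_ge0.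
  have psd_braket v : 0 <= braket M v v by apply: psdM.
  rewrite !rmorphB /= (geC0_conj (psd_braket _)) (geC0_conj (psd_braket x)).
  by rewrite (geC0_conj (mulr_ge0 tt_ge0 (psd_braket y))).
apply: conj_eq_of_polarization.
  by have := cross_real 1; rewrite conjC1 !mul1r.
by have := cross_real 'i; rewrite conjCi !mulNr.
Qed.

Lemma psd_braket_norm_le n (M : 'M[C]_n) x y : psdmx M ->
  `|braket M x y| *+ 2 <= braket M x x + braket M y y.
Proof.
move=> psdM; set b := braket M x y.
have [->|b_neq0] := eqVneq b 0; first by rewrite normr0 mul0rn addr_ge0 ?psdM.
have nb_gt0 : 0 < `|b| by rewrite normr_gt0.
have nb_conj : `|b|^* = `|b| by rewrite geC0_conj // ltW.
have bb : b^* * b = `|b| * `|b| by rewrite -normCKC expr2.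
have bb' : b * b^* = `|b| * `|b| by rewrite mulrC.
(* [t] makes both cross terms of [<x + t y|M|x + t y>] equal to [- |b|]. *)
pose t := - b^* / `|b|.
have := psdM (x + t *: y); rewrite -/(braket _ _ _) braket_expand (psd_braketC x y psdM).
have -> : t * b = - `|b| by rewrite /t !mulNr mulrAC bb mulfK ?gt_eqF.
have -> : t^* * b^* = - `|b|.
  by rewrite /t rmorphM rmorphN fmorphV /= conjCK nb_conj !mulNr mulrAC bb' mulfK ?gt_eqF.
have -> : t^* * t = 1.
  rewrite /t rmorphM rmorphN fmorphV /= conjCK nb_conj !mulNr mulrN opprK mulrACA -invfM.
  by rewrite bb' divff // mulf_neq0 ?gt_eqF.
rewrite mul1r; suff -> : braket M x x - `|b| - `|b| + braket M y y =
  braket M x x + braket M y y - `|b| *+ 2 by rewrite subr_ge0.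
by rewrite mulr2n; ring.
Qed.

Lemma povm_elem_rank1 n (x : 'cV[C]_n) : braket 1%:M x x <= 1 -> povm_elem (x *m adjmx x).
Proof.
move=> x_le1; split => z; rewrite -/(braket _ z z).
  by rewrite braket_rank1 -normCKC exprn_ge0.
rewrite braketBl braket_rank1 -normCKC subr_ge0 !braket1E.
apply: le_trans (leif_le (CauchySchwarz (@dotmx _ n) z^T x^T)) _.
by rewrite ler_piMr ?dnorm_ge0 //; move: x_le1; rewrite braket1E.
Qed.

Lemma exists_scale_unit_ball n (z : 'cV[C]_n) :
  exists2 c : C, 0 < c & braket 1%:M (c *: z) (c *: z) <= 1.
Proof.
set S := braket 1%:M z z.
have S_ge0 : 0 <= S by rewrite /S braket1E dnorm_ge0.
have S1_gt0 : 0 < 1 + S by rewrite ltr_pwDl.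
set c := (1 + S)^-1; have c_gt0 : 0 < c by rewrite invr_gt0.
exists c => //; rewrite braketZ -/S (geC0_conj (ltW c_gt0)) -mulrA.
have cS_le1 : c * S <= 1 by rewrite ler_pdivrMl // mulr1 lerDr ler01.
have c_le1 : c <= 1 by rewrite invf_le1 // lerDl.
by apply: le_trans c_le1; rewrite ler_piMr // ltW.
Qed.

Definition gram m n (M : 'M[C]_m) (W : 'M[C]_(m, n)) : 'M[C]_n :=
  \matrix_(i, j) braket M (col j W) (col i W).

Lemma gramE m n (M : 'M[C]_m) (W : 'M[C]_(m, n)) :
  gram M W = W^T *m M^T *m map_mx Num.conj W.
Proof.
apply/matrixP => i j; rewrite mxE /braket !mxE.
under eq_bigr do rewrite !mxE big_distrl /=.
under [RHS]eq_bigr do rewrite !mxE big_distrl /=.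
rewrite exchange_big /=; apply: eq_bigr => a _; apply: eq_bigr => a' _.
by rewrite !mxE; ring.
Qed.

Lemma gram_mulmx_adj m n (M : 'M[C]_m) (W : 'M[C]_(m, n)) (Y : 'M[C]_n) :
  map_mx Num.conj Y *m gram M W *m Y^T = gram M (W *m adjmx Y).
Proof.
rewrite !gramE /adjmx !trmx_mul trmxK !map_mxM map_trmx /= !mulmxA.
by congr (_ *m _); apply/matrixP => a b; rewrite !mxE conjCK.
Qed.

Lemma mxtrace_gram m n (M : 'M[C]_m) (W : 'M[C]_(m, n)) :
  \tr (gram M W) = \sum_i braket M (col i W) (col i W).
Proof. by apply: eq_bigr => i _; rewrite mxE. Qed.

Lemma gram_rank1 m n (x : 'cV[C]_m) (W : 'M[C]_(m, n)) (c : C) :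
  adjmx x *m W = c *: const_mx 1 -> gram (x *m adjmx x) W = const_mx (c^* * c).
Proof.
move=> xW; have braket_col j : braket 1%:M x (col j W) = c.
  transitivity ((adjmx x *m W) 0 j); last by rewrite xW !mxE mulr1.
  by rewrite /braket mulmx1 !mxE; apply: eq_bigr => k _; rewrite !mxE.
by apply/matrixP => i j; rewrite !mxE braket_rank1 !braket_col.
Qed.

Lemma gram1_coeff_mx m n (Phi : 'M[C]_(n, m)) (d : 'rV[C]_n) (Xi : 'M[C]_n) :
  Phi \is unitarymx ->
  gram 1%:M (Phi^T *m diag_mx d *m Xi) =
  Xi^T *m diag_mx (map_mx (fun z => z * z^*) d) *m map_mx Num.conj Xi.
Proof.
move=> unitaryPhi.
have PhiK : Phi *m map_mx Num.conj Phi^T = 1%:M by rewrite -map_trmx unitarymx_mul_adj.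
rewrite gramE trmx1 mulmx1 !trmx_mul trmxK tr_diag_mx !map_mxM map_diag_mx.
rewrite !mulmxA -(mulmxA _ Phi) PhiK mulmx1 -(mulmxA _ (diag_mx d)) mulmx_diag.
by congr (_ *m diag_mx _ *m _); apply/rowP => j; rewrite !mxE.
Qed.

Lemma mxtrace_unitary_conj n (G Y : 'M[C]_n) : Y \is unitarymx ->
  \tr (map_mx Num.conj Y *m G *m Y^T) = \tr G.
Proof.
move=> unitaryY; rewrite mxtrace_mulC mulmxA.
have -> : Y^T *m map_mx Num.conj Y = 1%:M.
  by rewrite -[map_mx _ Y]trmxK -trmx_mul -/(adjmx Y) unitarymx_adj_mul // trmx1.
by rewrite mul1mx.
Qed.

Lemma mxtrace_ptraceA dA dB (X : 'M[C]_(dA * dB)) : \tr X = \tr (ptraceA X).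
Proof.
rewrite /mxtrace sum_mxtens_index exchange_big /=.
by apply: eq_bigr => b _; rewrite mxE.
Qed.

Lemma orth_eigenbasis_diag n (Xi : 'M[C]_n) (d : 'rV[C]_n) : Xi \is unitarymx ->
  orth_eigenbasis (Xi^T *m diag_mx d *m map_mx Num.conj Xi) Xi.
Proof.
move=> unitaryXi; split => // k; exists (d 0 k).
pose e : 'cV[C]_n := (delta_mx 0 k)^T.
have XiK : map_mx Num.conj Xi *m (row k Xi)^T = e.
  rewrite -[map_mx _ Xi]trmxK -trmx_mul -/(adjmx Xi) -row_mul.
  by rewrite unitarymx_mul_adj // rowE mulmx1.
have dE : diag_mx d *m e = d 0 k *: e.
  apply/matrixP => i j; rewrite mul_diag_mx !mxE.
  case: (eqVneq i k) => [->//|_].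
  by rewrite andbF !mulr_natr /= !mulr0n.
have SE : Xi^T *m diag_mx d *m map_mx Num.conj Xi *m (row k Xi)^T = d 0 k *: (row k Xi)^T.
  by rewrite -!mulmxA XiK dE -scalemxAr /e trmx_delta -colE tr_row.
exact: SE.
Qed.

Lemma exists_adjmx_mul_eq dA dB (Phi : 'M[C]_(dB, dA)) (B B' : 'M[C]_dB) (u : 'rV[C]_dB) :
  Phi \is unitarymx -> B' *m B = 1%:M -> exists z, adjmx z *m (Phi^T *m B) = u.
Proof.
move=> unitaryPhi BK; exists (adjmx (u *m B' *m map_mx Num.conj Phi)).
have PhiK : map_mx Num.conj Phi *m Phi^T = 1%:M.
  have := congr1 (map_mx Num.conj) (unitarymx_mul_adj unitaryPhi).
  rewrite map_mxM map_mx1; suff -> : map_mx Num.conj (adjmx Phi) = Phi^T by [].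
  by apply/matrixP => i j; rewrite !mxE conjCK.
by rewrite adjmxK !mulmxA -(mulmxA _ _ Phi^T) PhiK mulmx1 -mulmxA BK mulmx1.
Qed.

Lemma l1cohE n (S Y : 'M[C]_n) :
  (l1coh S Y)%:C%C = \sum_i \sum_(j | i != j) `|(map_mx Num.conj Y *m S *m Y^T) i j|.
Proof.
rewrite /l1coh !rmorph_sum; apply: eq_bigr => i _; rewrite rmorph_sum.
by apply: eq_bigr => j _; case: (_ i j) => a b; rewrite normc_def.
Qed.

Lemma l1coh_gram_le n m (S Y : 'M[C]_n) (M : 'M[C]_m) (W : 'M[C]_(m, n)) :
  psdmx M -> 0 < \tr (gram M W) ->
  map_mx Num.conj Y *m S *m Y^T = (\tr (gram M W))^-1 *: gram M W ->
  l1coh S Y <= n%:R - 1.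
Proof.
move=> psdM tr_gt0 SE; rewrite -lecR l1cohE SE rmorphB rmorph_nat rmorph1 /=.
under eq_bigr do under eq_bigr do rewrite mxE normrM.
rewrite ger0_norm ?invr_ge0 ?(ltW tr_gt0) //.
under eq_bigr do rewrite -mulr_sumr.
rewrite -mulr_sumr ler_pdivrMl // mulrC mxtrace_gram.
apply: sum_offdiag_le => i j; rewrite mxE addrC.
exact: psd_braket_norm_le.
Qed.

Lemma l1coh_max_coherent n (S Y : 'M[C]_n) : (0 < n)%N ->
  map_mx Num.conj Y *m S *m Y^T = const_mx n%:R^-1 -> l1coh S Y = n%:R - 1.
Proof.
move=> n_gt0 SE; apply: (@complexI R).
rewrite l1cohE SE rmorphB rmorph_nat rmorph1 /=.
under eq_bigr do under eq_bigr do rewrite mxE ger0_norm ?invr_ge0 ?ler0n //.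
have n_neq0 : n%:R != 0 :> C by rewrite pnatr_eq0 -lt0n.
have row_sum (i : 'I_n) : \sum_(j | i != j) n%:R^-1 = 1 - n%:R^-1 :> C.
  apply: (addIr n%:R^-1).
  have /= -> := sumr_neq (fun=> n%:R^-1 : C) i.
  by rewrite sumr_const card_ord subrK -[_ *+ n]mulr_natr mulVf.
rewrite (eq_bigr (fun=> 1 - n%:R^-1)) => [|i _]; last exact: row_sum.
by rewrite sumr_const card_ord -[_ *+ n]mulr_natl mulrBr mulr1 mulfV.
Qed.

Section PureState.
Variables (dA dB : nat) (v : 'M[C]_(dA * dB, 1 * 1)) (V : 'M[C]_(dA, dB)).
Hypothesis vE : forall a b k, v (mxtens_index (a, b)) k = V a b.

Lemma projector_tensE a b a' b' :
  projector v (mxtens_index (a, b)) (mxtens_index (a', b')) = V a b * (V a' b')^*.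
Proof.
rewrite /projector /adjmx !mxE.
by under eq_bigr do rewrite !mxE !vE; rewrite sumr_const card_ord.
Qed.

Lemma ptraceA_projector : ptraceA (projector v) = gram 1%:M V.
Proof.
apply/matrixP => b b'; rewrite !mxE /braket mulmx1 !mxE.
by apply: eq_bigr => a _; rewrite projector_tensE !mxE mulrC.
Qed.

Lemma ptraceA_pure (M : 'M[C]_dA) :
  ptraceA ((M *t (1%:M : 'M[C]_dB)) *m projector v) = gram M V.
Proof.
apply/matrixP => b b'; rewrite !mxE /braket !mxE.
under [RHS]eq_bigr do rewrite !mxE big_distrl /=.
rewrite [RHS]exchange_big /=; apply: eq_bigr => a _.
rewrite mxE sum_mxtens_index; apply: eq_bigr => a' _.
rewrite (bigD1 b) //= big1 => [|b'' neq_b]; last first.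
  by rewrite tensmxE projector_tensE !mxE eq_sym (negbTE neq_b) mulr0 mul0r.
by rewrite addr0 tensmxE projector_tensE !mxE eqxx mulr1; ring.
Qed.

Variable Y : 'M[C]_dB.
Hypothesis unitaryY : Y \is unitarymx.

Lemma prob_M_pure (M : 'M[C]_dA) :
  prob_M (projector v) M = \tr (gram M (V *m adjmx Y)).
Proof.
by rewrite /prob_M mxtrace_ptraceA ptraceA_pure -gram_mulmx_adj mxtrace_unitary_conj.
Qed.

Lemma steered_pure (M : 'M[C]_dA) :
  map_mx Num.conj Y *m steered (projector v) M *m Y^T =
  (prob_M (projector v) M)^-1 *: gram M (V *m adjmx Y).
Proof. by rewrite /steered -scalemxAr -scalemxAl ptraceA_pure gram_mulmx_adj. Qed.

Lemma l1coh_steered_le (M : 'M[C]_dA) : povm_elem M -> 0 < prob_M (projector v) M ->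
  l1coh (steered (projector v) M) Y <= dB%:R - 1.
Proof.
move=> [psdM _]; rewrite prob_M_pure => p_gt0.
by apply: (l1coh_gram_le psdM p_gt0); rewrite steered_pure prob_M_pure.
Qed.

Lemma steered_rank1_max_coherent (x : 'cV[C]_dA) (c : C) : (0 < dB)%N -> c != 0 ->
  adjmx x *m (V *m adjmx Y) = c *: const_mx 1 ->
  0 < prob_M (projector v) (x *m adjmx x) /\
  l1coh (steered (projector v) (x *m adjmx x)) Y = dB%:R - 1.
Proof.
move=> dB_gt0 c_neq0 xW.
have cc_gt0 : 0 < c^* * c by rewrite -normCKC exprn_gt0 // normr_gt0.
have pE : prob_M (projector v) (x *m adjmx x) = (c^* * c) *+ dB.
  rewrite prob_M_pure (gram_rank1 xW) /mxtrace.
  by under eq_bigr do rewrite mxE; rewrite sumr_const card_ord.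
split; first by rewrite pE pmulrn_lgt0.
apply: l1coh_max_coherent => //.
rewrite steered_pure (gram_rank1 xW) pE scalemx_const.
by rewrite -mulr_natr invfM mulrAC mulVf ?gt_eqF // mul1r.
Qed.

End PureState.

Lemma schmidt_stateE dA dB (lam : 'I_dB -> C) (Phi : 'M[C]_(dB, dA)) (Xi : 'M[C]_dB) a b k :
  schmidt_state lam Phi Xi (mxtens_index (a, b)) k =
  (Phi^T *m diag_mx (\row_i lam i) *m Xi) a b.
Proof.
rewrite /schmidt_state summxE mul_mx_diag mxE.
by apply: eq_bigr => i _; rewrite !mxE mxtens_indexK /=; ring.
Qed.

Section SchmidtState.
Variables (dA dB : nat) (lam : 'I_dB -> C) (Phi : 'M[C]_(dB, dA)) (Xi : 'M[C]_dB).
Hypotheses (unitaryPhi : Phi \is unitarymx) (unitaryXi : Xi \is unitarymx).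
Hypothesis lam_neq0 : forall i, lam i != 0.
Hypothesis dB_gt0 : (0 < dB)%N.

Let D := diag_mx (\row_i lam i).
Let rho := projector (schmidt_state lam Phi Xi).
Let rhoE := @schmidt_stateE dA dB lam Phi Xi.

Lemma ptraceA_schmidt_state : ptraceA rho =
  Xi^T *m diag_mx (map_mx (fun z => z * z^*) (\row_i lam i)) *m map_mx Num.conj Xi.
Proof. by rewrite (ptraceA_projector rhoE) gram1_coeff_mx. Qed.

Lemma ereal_sup_steered_coh (Y : 'M[C]_dB) : Y \is unitarymx ->
  ereal_sup [set (l1coh (steered rho M) Y)%:E
            | M in [set M : 'M[C]_dA | povm_elem M /\ 0 < prob_M rho M]] =
  (dB%:R - 1)%:E.
Proof.
move=> unitaryY; apply: le_anti; apply/andP; split.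
  apply: ge_ereal_sup => _ [M [povmM p_gt0] <-]; rewrite lee_fin.
  exact: (l1coh_steered_le rhoE).
pose B := D *m Xi *m adjmx Y.
pose B' := Y *m adjmx Xi *m diag_mx (\row_i (lam i)^-1).
have BK : B' *m B = 1%:M.
  have DK : diag_mx (\row_i (lam i)^-1) *m D = 1%:M.
    by rewrite mulmx_diag; apply/matrixP => i j; rewrite !mxE mulVf.
  rewrite /B /B' !mulmxA -(mulmxA _ _ D) DK mulmx1 -(mulmxA _ _ Xi).
  by rewrite unitarymx_adj_mul // mulmx1 unitarymx_mul_adj.
have [z zE] := exists_adjmx_mul_eq (const_mx 1) unitaryPhi BK.
have [c c_gt0 x_le1] := exists_scale_unit_ball z.
have xW : adjmx (c *: z) *m ((Phi^T *m D *m Xi) *m adjmx Y) = c *: const_mx 1.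
  have -> : Phi^T *m D *m Xi *m adjmx Y = Phi^T *m B by rewrite /B !mulmxA.
  by rewrite adjmxZ -scalemxAl zE (geC0_conj (ltW c_gt0)).
have [p_gt0 cohE] :=
  steered_rank1_max_coherent rhoE unitaryY dB_gt0 (lt0r_neq0 c_gt0) xW.
apply: ereal_sup_ubound; exists ((c *: z) *m adjmx (c *: z)); last by rewrite cohE.
by split => //; apply: povm_elem_rank1.
Qed.

End SchmidtState.
End SteeredCoherence.

Theorem mainTheorem2 (R : realType) (dA dB : nat)
    (lam : 'I_dB -> R[i]) (Phi : 'M[R[i]]_(dB, dA)) (Xi : 'M[R[i]]_dB) :
  Phi \is unitarymx ->
  Xi \is unitarymx ->
  (forall i, lam i != 0) ->
  \sum_(i < dB) Normc.normc (lam i) ^+ 2 = 1 ->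
  max_steered_coh (projector (schmidt_state lam Phi Xi)) = ((dB%:R - 1)%:E)%E.
Proof.
move=> unitaryPhi unitaryXi lam_neq0 norm_sum.
(* The normalisation of [lam] only serves to rule out [dB = 0]. *)
have dB_gt0 : (0 < dB)%N.
  rewrite lt0n; apply/eqP => dB0; move: norm_sum; subst dB.
  by rewrite big_ord0 => /esym/eqP; rewrite oner_eq0.
have supE := ereal_sup_steered_coh unitaryPhi unitaryXi lam_neq0 dB_gt0.
rewrite /max_steered_coh; set S := (X in ereal_inf X).
suff -> : S = [set (dB%:R - 1)%:E]%classic by rewrite ereal_inf1.
apply/seteqP; split => [_ [Y [unitaryY _] <-]|_ ->] /=; first exact: supE.
exists Xi; last exact: supE.
by rewrite /= ptraceA_schmidt_state //; apply: orth_eigenbasis_diag.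
Qed.
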